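(* Let $\gamma_1,\dots,\gamma_u$ be real numbers, let $k_1<k_2<\cdots<k_t$ be positive integers, put $\underline{k}=\{k_1,\dots,k_t\}$, and let $m_0$ be a positive integer. Consider the pairs $(k,m)$ with $k\in\underline{k}$ and integers $m\ge m_0$, ordered as $(k_1,m_0),\dots,(k_t,m_0),(k_1,m_0+1),\dots,(k_t,m_0+1),(k_1,m_0+2),\dots$. Assume that for each such pair $(k,m)$ there exist a linear form $r(k,m)=h_0+\sum_{i=1}^u h_i\gamma_i$ with $h_i=h_i(k,m)\in\mathbb{Z}$ and a positive integer $Q_{k,m}$ such that \begin{align*} &c_1(k)Q_{k,m}\le\max_{1\le i\le u}|h_i|\le c_2(k)Q_{k,m},\\ &Q_{k_j,m}<Q_{k_{j+1},m}\le C_1(\underline{k})Q_{k_j,m}^{\theta(j)},\quad j=1,\dots,t-1,\\ &Q_{k_t,m}<Q_{k_1,m+1}\le C_1(\underline{k})Q_{k_t,m}^{\theta(t)},\\ &c_3(k)Q_{k,m}^{-\alpha(k)}\le|r(k,m)|\le c_4(k)Q_{k,m}^{-\beta(k)}, \end{align*} where $c_i(k)$ and $C_1(\underline{k})$ are positive constants depending only on $k$ and on $\underline{k}$ respectively, and $\theta(j)\ge1$, $\alpha(k_j)\ge\beta(k_j)>0$ are constants, all independent of $m$. Then there exist positive constants $Q_0=Q_0(\underline{k},m_0)$ and $C=C(\underline{k},m_0)$ such that for all rational numbers $p_1/q,\dots,p_u/q$ (with $p_i\in\mathbb{Z}$, $q\in\mathbb{Z}$) with $q\ge Q_0$, \[\max_{1\le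 i\le u}\left|\gamma_i-\frac{p_i}{q}\right|>Cq^{-\mu},\qquad\text{where }\mu=\max_{1\le j\le t}\theta(j)\frac{\alpha(k_{j+1})+1}{\beta(k_j)}\text{ and }\alpha(k_{t+1}):=\alpha(k_1).\] *)

From Stdlib Require Import Reals ZArith.
Open Scope R_scope.

(* max1 f n = max_{1 <= i <= n} f i  (meaningful for n >= 1; max1 f 0 = f 1). *)
Fixpoint max1 (f : nat -> R) (n : nat) : R :=
  match n with
  | O => f 1%nat
  | S O => f 1%nat
  | S n' => Rmax (max1 f n') (f n)
  end.

Fixpoint lin_form (h : nat -> Z) (gamma : nat -> R) (u : nat) : R :=
  match u with
  | O => IZR (h 0%nat)
  | S u' => lin_form h gamma u' + IZR (h u) * gamma u
  end.

From Stdlib Require Import Reals ZArith Lra Lia Psatz Classical.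
Open Scope R_scope.

(* For a given q, let N be the first index at
   which the upper bound c4 Q_N^-beta on the linear form drops below 1/(2q): then Q_(N-1)^beta
   <= 2 c4 q, so the height Y := Q_N is O(q^(theta/beta)), and the form r := r_N satisfies
   q |r| < 1/2. Replacing each gamma_i by p_i/q turns q r into an integer A, up to an error
   u c2 Y q delta, where delta is the approximation error. If A = 0, the lower bound
   |r| >= c3 Y^-alpha forces delta >> Y^-(alpha+1) >> q^-(theta (alpha+1)/beta); if A <> 0,
   then u c2 Y q delta >= 1/2 forces delta >> q^-(1 + theta/beta). Both exponents are at most
   mu: the first by definition, the second by looking at an index maximising theta/beta. *)

Lemma max1_ge (f : nat -> R) (n i : nat) : (1 <= i <= n)%nat -> f i <= max1 f n.
Proof.
  destruct n as [|n]; [lia|]. revert i.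
  induction n as [|n IH]; intros i Hi.
  - replace i with 1%nat by lia. simpl. lra.
  - change (max1 f (S (S n))) with (Rmax (max1 f (S n)) (f (S (S n)))).
    destruct (Nat.eq_dec i (S (S n))) as [->|Hne].
    + apply Rmax_r.
    + eapply Rle_trans; [apply IH; lia | apply Rmax_l].
Qed.

Lemma max1_attained (f : nat -> R) (n : nat) :
  (1 <= n)%nat -> exists i, (1 <= i <= n)%nat /\ max1 f n = f i.
Proof.
  destruct n as [|n]; [lia|]. intros _.
  induction n as [|n [i [Hi IH]]].
  - exists 1%nat. split; [lia | reflexivity].
  - change (max1 f (S (S n))) with (Rmax (max1 f (S n)) (f (S (S n)))).
    rewrite IH. apply Rmax_case.
    + exists i. split; [lia | reflexivity].
    + exists (S (S n)). split; [lia | reflexivity].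
Qed.

(* Take [i] maximising [x]: then [x (s i) <= x i], so [1 <= x i * b (s i) <= x i * a (s i)]. *)
Lemma one_plus_le_of_cycle (t : nat) (s : nat -> nat) (x a b : nat -> R) (mu : R) :
  (1 <= t)%nat ->
  (forall i, (1 <= i <= t)%nat -> (1 <= s i <= t)%nat) ->
  (forall i, (1 <= i <= t)%nat -> 0 < b i <= a i) ->
  (forall i, (1 <= i <= t)%nat -> 1 <= x i * b i) ->
  (forall i, (1 <= i <= t)%nat -> x i * (a (s i) + 1) <= mu) ->
  forall j, (1 <= j <= t)%nat -> 1 + x j <= mu.
Proof.
  intros Ht Hs Hab Hxb Hmu j Hj.
  destruct (max1_attained x t Ht) as [i [Hi Hmax]].
  assert (Hxj : x j <= x i) by (rewrite <- Hmax; apply max1_ge; exact Hj).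
  assert (Hsi : x (s i) <= x i) by (rewrite <- Hmax; apply max1_ge, Hs, Hi).
  destruct (Hab _ (Hs i Hi)) as [Hb Hba]. specialize (Hxb _ (Hs i Hi)).
  specialize (Hmu i Hi).
  assert (Hxib : 1 <= x i * b (s i)) by nra.
  assert (Hxi : 0 < x i) by nra.
  nra.
Qed.

Lemma ex_pos_uniform (n : nat) (P : nat -> R -> Prop) :
  (forall j D D', P j D -> 0 < D' <= D -> P j D') ->
  (forall j, (1 <= j <= n)%nat -> exists D, 0 < D /\ P j D) ->
  exists D, 0 < D /\ forall j, (1 <= j <= n)%nat -> P j D.
Proof.
  intros Hmon. induction n as [|n IH]; intros H.
  - exists 1. split; [lra | intros; lia].
  - destruct IH as [D1 [HD1 HP1]]; [intros; apply H; lia |].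
    destruct (H (S n) ltac:(lia)) as [D2 [HD2 HP2]].
    assert (Hmin : 0 < Rmin D1 D2) by (apply Rmin_case; lra).
    exists (Rmin D1 D2). split; [exact Hmin |].
    intros j Hj. destruct (Nat.eq_dec j (S n)) as [->|Hne].
    + eapply Hmon; [exact HP2 | split; [exact Hmin | apply Rmin_r]].
    + eapply Hmon; [apply HP1; lia | split; [exact Hmin | apply Rmin_l]].
Qed.

Lemma first_crossing (P : nat -> Prop) (n : nat) : ~ P 0%nat -> P n -> exists N, ~ P N /\ P (S N).
Proof.
  intros H0 Hn. induction n as [|n IH]; [contradiction |].
  destruct (classic (P n)) as [Hp | Hnp]; [exact (IH Hp) | exists n; split; assumption].
Qed.

Lemma lin_form_near_int (h p : nat -> Z) (gamma : nat -> R) (q : Z) (M d : R) (u : nat) :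
  0 < IZR q ->
  (forall i, (1 <= i <= u)%nat -> Rabs (IZR (h i)) <= M) ->
  (forall i, (1 <= i <= u)%nat -> Rabs (gamma i - IZR (p i) / IZR q) <= d) ->
  exists A : Z, Rabs (IZR q * lin_form h gamma u - IZR A) <= INR u * M * IZR q * d.
Proof.
  intros Hq. induction u as [|u IH]; intros HM Hd.
  - exists (q * h 0%nat)%Z. simpl. rewrite mult_IZR, Rminus_diag, Rabs_R0. lra.
  - destruct IH as [A HA]; [intros; apply HM; lia | intros; apply Hd; lia |].
    exists (A + h (S u) * p (S u))%Z.
    simpl lin_form. rewrite plus_IZR, mult_IZR, S_INR.
    replace (IZR q * (lin_form h gamma u + IZR (h (S u)) * gamma (S u)) -
             (IZR A + IZR (h (S u)) * IZR (p (S u))))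
      with ((IZR q * lin_form h gamma u - IZR A) +
            IZR (h (S u)) * (IZR q * (gamma (S u) - IZR (p (S u)) / IZR q)))
      by (field; lra).
    eapply Rle_trans; [apply Rabs_triang |].
    rewrite !Rabs_mult, (Rabs_right (IZR q)) by lra.
    assert (Hh := HM (S u) ltac:(lia)). assert (Hg := Hd (S u) ltac:(lia)).
    assert (Rabs (IZR (h (S u))) * (IZR q * Rabs (gamma (S u) - IZR (p (S u)) / IZR q))
            <= M * (IZR q * d)).
    { apply Rmult_le_compat; [apply Rabs_pos | | exact Hh |].
      - apply Rmult_le_pos; [lra | apply Rabs_pos].
      - apply Rmult_le_compat_l; lra. }
    lra.
Qed.

Lemma near_int_dichotomy (x E : R) (A : Z) :
  Rabs (x - IZR A) <= E -> Rabs x < / 2 -> Rabs x <= E \/ / 2 <= E.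
Proof.
  intros HE Hx. destruct (Z.eq_dec A 0) as [->|HA].
  - left. rewrite Rminus_0_r in HE. exact HE.
  - right.
    assert (HA1 : 1 <= Rabs (IZR A)).
    { rewrite <- abs_IZR. apply IZR_le. lia. }
    pose proof (Rabs_triang_inv (IZR A) x). rewrite <- Rabs_Ropp in HE.
    replace (- (x - IZR A)) with (IZR A - x) in HE by ring. lra.
Qed.

Lemma Rpower_gt0 (x y : R) : 0 < Rpower x y.
Proof. apply exp_pos. Qed.

Lemma Rpower_le_of_inv_le (c b q X : R) :
  0 < c -> 0 < q -> / (2 * q) <= c * Rpower X (- b) -> Rpower X b <= 2 * c * q.
Proof.
  intros Hc Hq H. rewrite Rpower_Ropp in H.
  pose proof (Rpower_gt0 X b) as HP.
  apply (Rmult_le_compat_r (2 * q * Rpower X b)) in H; [| nra].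
  replace (/ (2 * q) * (2 * q * Rpower X b)) with (Rpower X b) in H by (field; lra).
  replace (c * / Rpower X b * (2 * q * Rpower X b)) with (2 * c * q) in H by (field; lra).
  exact H.
Qed.

Lemma mul_Rpower_neg_lt (c b eps X : R) :
  0 < c -> 0 < b -> 0 < eps -> Rpower (c / eps) (/ b) < X -> c * Rpower X (- b) < eps.
Proof.
  intros Hc Hb He HX.
  assert (Hce : 0 < c / eps) by (apply Rdiv_lt_0_compat; lra).
  assert (HXb : c / eps < Rpower X b).
  { replace (c / eps) with (Rpower (Rpower (c / eps) (/ b)) b)
      by (rewrite Rpower_mult, Rinv_l, Rpower_1; lra).
    apply Rlt_Rpower_l; [exact Hb | split; [apply Rpower_gt0 | exact HX]]. }
  rewrite Rpower_Ropp. pose proof (Rpower_gt0 X b).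
  apply (Rmult_lt_reg_r (Rpower X b)); [lra |].
  rewrite Rmult_assoc, Rinv_l by lra.
  apply (Rmult_lt_compat_l eps) in HXb; [| exact He].
  replace (eps * (c / eps)) with c in HXb by (field; lra). lra.
Qed.

Lemma next_height_le (c b th C1 q X Y : R) :
  0 < c -> 0 < b -> 0 <= th -> 0 < C1 -> 0 < q ->
  / (2 * q) <= c * Rpower X (- b) -> Y <= C1 * Rpower X th ->
  Y <= C1 * Rpower (2 * c) (th / b) * Rpower q (th / b).
Proof.
  intros Hc Hb Hth HC1 Hq Hsmall HY.
  assert (HXth : Rpower X th <= Rpower (2 * c * q) (th / b)).
  { replace (Rpower X th) with (Rpower (Rpower X b) (th / b))
      by (rewrite Rpower_mult; f_equal; field; lra).
    apply Rle_Rpower_l.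
    - apply Rmult_le_pos; [lra | left; apply Rinv_0_lt_compat; lra].
    - split; [apply Rpower_gt0 | exact (Rpower_le_of_inv_le c b q X Hc Hq Hsmall)]. }
  rewrite <- Rpower_mult_distr in HXth by lra.
  rewrite Rmult_assoc. eapply Rle_trans; [exact HY |].
  apply Rmult_le_compat_l; lra.
Qed.

Lemma lower_bound_of_small_form (c3 w al K e q Y d r : R) :
  0 < c3 -> 0 < w -> 0 <= al -> 0 < K -> 0 < Y -> 0 < q ->
  Y <= K * Rpower q e -> c3 * Rpower Y (- al) <= Rabs r -> Rabs r <= w * Y * d ->
  c3 / w * Rpower K (- (al + 1)) * Rpower q (- (e * (al + 1))) <= d.
Proof.
  intros Hc3 Hw Hal HK HY Hq HYK Hlow Hup.
  assert (Hpow : Rpower K (- (al + 1)) * Rpower q (- (e * (al + 1)))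
                 <= Rpower Y (- al) * / Y).
  { replace (- (e * (al + 1))) with (e * - (al + 1)) by ring.
    rewrite <- Rpower_mult, Rpower_mult_distr by (try apply Rpower_gt0; lra).
    rewrite <- (Rpower_1 Y) at 2 by lra.
    rewrite <- Rpower_Ropp, <- Rpower_plus.
    replace (- al + - (1)) with (- (al + 1)) by ring. rewrite !Rpower_Ropp.
    apply Rinv_le_contravar; [apply Rpower_gt0 |].
    apply Rle_Rpower_l; lra. }
  assert (Hr : c3 * Rpower Y (- al) * / Y <= w * d).
  { apply (Rmult_le_reg_l Y); [exact HY |].
    replace (Y * (c3 * Rpower Y (- al) * / Y)) with (c3 * Rpower Y (- al)) by (field; lra).
    lra. }
  apply (Rmult_le_reg_l w); [exact Hw |].
  replace (w * (c3 / w * Rpower K (- (al + 1)) * Rpower q (- (e * (al + 1)))))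
    with (c3 * (Rpower K (- (al + 1)) * Rpower q (- (e * (al + 1))))) by (field; lra).
  eapply Rle_trans; [apply Rmult_le_compat_l; [lra | exact Hpow] |]. lra.
Qed.

Lemma lower_bound_of_int_gap (w K e q Y d : R) :
  0 < w -> 0 < K -> 0 < Y -> 0 < q ->
  Y <= K * Rpower q e -> / 2 <= w * Y * q * d ->
  / (2 * w * K) * Rpower q (- (1 + e)) <= d.
Proof.
  intros Hw HK HY Hq HYK Hgap.
  pose proof (Rpower_gt0 q e) as Hqe.
  rewrite Rpower_Ropp, Rpower_plus, Rpower_1 by lra.
  rewrite <- Rinv_mult.
  apply Rle_trans with (/ (2 * w * Y * q)).
  - apply Rinv_le_contravar; [repeat apply Rmult_lt_0_compat; lra |].
    assert (Y * q <= K * Rpower q e * q) by (apply Rmult_le_compat_r; lra).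
    nra.
  - apply (Rmult_le_reg_l (2 * w * Y * q)); [repeat apply Rmult_lt_0_compat; lra |].
    rewrite Rinv_r by (repeat apply Rmult_integral_contrapositive_currified; lra).
    lra.
Qed.

(* [X] and [Y] are consecutive heights at the crossing: the form of height [X] is still allowed
   to be [>= 1/(2q)], the next form [r] is not; [A] is the integer that [q r] becomes when the
   [gamma_i] are replaced by their approximations, which are at distance [<= d]. *)
Definition step_bound (c4 b th C1 al c3 w D : R) : Prop :=
  forall mu X Y q d r A,
    th * (al + 1) / b <= mu -> 1 + th / b <= mu -> 1 <= Y -> 1 <= q ->
    / (2 * q) <= c4 * Rpower X (- b) -> Y <= C1 * Rpower X th ->
    c3 * Rpower Y (- al) <= Rabs r -> q * Rabs r < / 2 ->
    Rabs (q * r - IZR A) <= w * Y * q * d ->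
    D * Rpower q (- mu) <= d.

Lemma step_bound_le (c4 b th C1 al c3 w D D' : R) :
  step_bound c4 b th C1 al c3 w D -> 0 < D' <= D -> step_bound c4 b th C1 al c3 w D'.
Proof.
  intros HD HD' mu X Y q d r A H1 H2 H3 H4 H5 H6 H7 H8 H9.
  pose proof (HD mu X Y q d r A H1 H2 H3 H4 H5 H6 H7 H8 H9).
  pose proof (Rpower_gt0 q (- mu)). nra.
Qed.

Lemma ex_step_bound (c4 b th C1 al c3 w : R) :
  0 < c4 -> 0 < b -> 0 <= th -> 0 < C1 -> 0 <= al -> 0 < c3 -> 0 < w ->
  exists D, 0 < D /\ step_bound c4 b th C1 al c3 w D.
Proof.
  intros Hc4 Hb Hth HC1 Hal Hc3 Hw.
  set (e := th / b). set (K := C1 * Rpower (2 * c4) e).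
  assert (HK : 0 < K) by (apply Rmult_lt_0_compat; [lra | apply Rpower_gt0]).
  set (D1 := c3 / w * Rpower K (- (al + 1))). set (D2 := / (2 * w * K)).
  assert (HD1 : 0 < D1).
  { apply Rmult_lt_0_compat; [apply Rdiv_lt_0_compat; lra | apply Rpower_gt0]. }
  assert (HD2 : 0 < D2) by (apply Rinv_0_lt_compat; nra).
  exists (Rmin D1 D2). split; [apply Rmin_case; lra |].
  intros mu X Y q d r A Hmu1 Hmu2 HY Hq Hsmall HYX Hlow Hr Hnear.
  assert (HYK : Y <= K * Rpower q e) by (eapply next_height_le; eauto; lra).
  assert (Hdecay : forall E D', Rmin D1 D2 <= D' -> E <= mu ->
                   D' * Rpower q (- E) <= d -> Rmin D1 D2 * Rpower q (- mu) <= d).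
  { intros E D' HD' HE Hd. eapply Rle_trans; [| exact Hd].
    apply Rmult_le_compat; [apply Rmin_case; lra | left; apply Rpower_gt0 | exact HD' |].
    apply Rle_Rpower; lra. }
  rewrite <- (Rabs_right q), <- Rabs_mult in Hr by lra.
  destruct (near_int_dichotomy (q * r) (w * Y * q * d) A Hnear Hr) as [Hzero | Hgap].
  - apply (Hdecay (e * (al + 1)) D1 (Rmin_l D1 D2)); [unfold e; unfold Rdiv in *; lra |].
    apply (lower_bound_of_small_form c3 w al K e q Y d r); try lra.
    rewrite Rabs_mult, Rabs_right in Hzero by lra.
    apply (Rmult_le_reg_l q); lra.
  - apply (Hdecay (1 + e) D2 (Rmin_r D1 D2)); [exact Hmu2 |].
    exact (lower_bound_of_int_gap w K e q Y d Hw HK ltac:(lra) ltac:(lra) HYK Hgap).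
Qed.

Definition cyc_succ (t j : nat) : nat := if Nat.ltb j t then S j else 1%nat.

Lemma cyc_succ_range (t j : nat) : (1 <= j <= t)%nat -> (1 <= cyc_succ t j <= t)%nat.
Proof. unfold cyc_succ. destruct (Nat.ltb_spec j t); lia. Qed.

(* [(j, m)] stands for the pair [(k_j, m)]. *)
Fixpoint pair_seq (t m0 N : nat) : nat * nat :=
  match N with
  | O => (1%nat, m0)
  | S N => let (j, m) := pair_seq t m0 N in
           (cyc_succ t j, if Nat.ltb j t then m else S m)
  end.

Lemma pair_seq_range (t m0 N : nat) : (1 <= t)%nat ->
  (1 <= fst (pair_seq t m0 N) <= t)%nat /\ (m0 <= snd (pair_seq t m0 N))%nat.
Proof.
  intros Ht. induction N as [|N IH]; simpl; [lia |].
  destruct (pair_seq t m0 N) as [j m]; simpl in *.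
  unfold cyc_succ. destruct (Nat.ltb_spec j t); simpl; lia.
Qed.

Section LowerBound.

Variables (u t m0 : nat) (gamma : nat -> R) (h : nat -> nat -> nat -> Z) (Q : nat -> nat -> Z)
  (c2 c3 c4 theta alpha beta : nat -> R) (C1 : R).

Hypothesis hu : (1 <= u)%nat.
Hypothesis ht : (1 <= t)%nat.
Hypothesis hC1 : 0 < C1.
Hypothesis hc2 : forall j, (1 <= j <= t)%nat -> 0 < c2 j.
Hypothesis hc3 : forall j, (1 <= j <= t)%nat -> 0 < c3 j.
Hypothesis hc4 : forall j, (1 <= j <= t)%nat -> 0 < c4 j.
Hypothesis htheta : forall j, (1 <= j <= t)%nat -> 1 <= theta j.
Hypothesis hbeta : forall j, (1 <= j <= t)%nat -> 0 < beta j.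
Hypothesis hbeta_alpha : forall j, (1 <= j <= t)%nat -> beta j <= alpha j.
Hypothesis hQ1 : (0 < Q 1%nat m0)%Z.
Hypothesis hh : forall j m, (1 <= j <= t)%nat -> (m0 <= m)%nat ->
  max1 (fun i => Rabs (IZR (h j m i))) u <= c2 j * IZR (Q j m).
Hypothesis hQj : forall j m, (1 <= j < t)%nat -> (m0 <= m)%nat ->
  (Q j m < Q (S j) m)%Z /\ IZR (Q (S j) m) <= C1 * Rpower (IZR (Q j m)) (theta j).
Hypothesis hQt : forall m, (m0 <= m)%nat ->
  (Q t m < Q 1%nat (S m))%Z /\ IZR (Q 1%nat (S m)) <= C1 * Rpower (IZR (Q t m)) (theta t).
Hypothesis hr : forall j m, (1 <= j <= t)%nat -> (m0 <= m)%nat ->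
  c3 j * Rpower (IZR (Q j m)) (- alpha j) <= Rabs (lin_form (h j m) gamma u) /\
  Rabs (lin_form (h j m) gamma u) <= c4 j * Rpower (IZR (Q j m)) (- beta j).

Let cls (N : nat) : nat := fst (pair_seq t m0 N).
Let idx (N : nat) : nat := snd (pair_seq t m0 N).
Let height (N : nat) : R := IZR (Q (cls N) (idx N)).
Let form (N : nat) : R := lin_form (h (cls N) (idx N)) gamma u.
Let decay (N : nat) : R := c4 (cls N) * Rpower (height N) (- beta (cls N)).

Definition mu_exponent : R :=
  let alpha' := fun j : nat => if Nat.eqb j (S t) then alpha 1%nat else alpha j in
  max1 (fun j => theta j * (alpha' (S j) + 1) / beta j) t.

Lemma cls_range (N : nat) : (1 <= cls N <= t)%nat.
Proof. apply pair_seq_range, ht. Qed.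

Lemma idx_ge (N : nat) : (m0 <= idx N)%nat.
Proof. apply pair_seq_range, ht. Qed.

Lemma cls_S (N : nat) : cls (S N) = cyc_succ t (cls N).
Proof. unfold cls; simpl. destruct (pair_seq t m0 N); reflexivity. Qed.

Lemma height_step (N : nat) :
  (Q (cls N) (idx N) < Q (cls (S N)) (idx (S N)))%Z /\
  height (S N) <= C1 * Rpower (height N) (theta (cls N)).
Proof.
  unfold height, cls, idx. pose proof (pair_seq_range t m0 N ht) as Hrange. simpl.
  destruct (pair_seq t m0 N) as [j m]; simpl in *. unfold cyc_succ.
  destruct (Nat.ltb_spec j t).
  - apply hQj; lia.
  - replace j with t by lia. apply hQt; lia.
Qed.

Lemma height_ge (N : nat) : INR N + 1 <= height N.
Proof.
  assert (HZ : (Z.of_nat N + 1 <= Q (cls N) (idx N))%Z).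
  { induction N as [|N IH]; [unfold cls, idx; simpl; lia |].
    destruct (height_step N) as [Hlt _]. lia. }
  unfold height. rewrite INR_IZR_INZ, <- plus_IZR. apply IZR_le, HZ.
Qed.

Lemma decay_pos (N : nat) : 0 < decay N.
Proof. apply Rmult_lt_0_compat; [apply hc4, cls_range | apply Rpower_gt0]. Qed.

Lemma mu_ge_step (j : nat) : (1 <= j <= t)%nat ->
  theta j * (alpha (cyc_succ t j) + 1) / beta j <= mu_exponent.
Proof.
  intros Hj. unfold mu_exponent. eapply Rle_trans; [| apply (max1_ge _ t j Hj)].
  right. unfold cyc_succ.
  destruct (Nat.ltb_spec j t), (Nat.eqb_spec (S j) (S t)); try lia; reflexivity.
Qed.

Lemma mu_ge_one_plus (j : nat) : (1 <= j <= t)%nat -> 1 + theta j / beta j <= mu_exponent.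
Proof.
  apply (one_plus_le_of_cycle t (cyc_succ t) (fun i => theta i / beta i) alpha beta).
  - exact ht.
  - exact (cyc_succ_range t).
  - intros i Hi. split; auto.
  - intros i Hi. specialize (hbeta i Hi). specialize (htheta i Hi).
    unfold Rdiv. rewrite Rmult_assoc, Rinv_l; lra.
  - intros i Hi. rewrite <- (mu_ge_step i Hi). right. field. specialize (hbeta i Hi). lra.
Qed.

Lemma decay_eventually_lt (eps : R) : 0 < eps -> exists N, decay N < eps.
Proof.
  intros He.
  destruct (ex_pos_uniform t
    (fun j D => forall X, / D <= X -> c4 j * Rpower X (- beta j) < eps)) as [D [HD HDj]].
  - intros j D D' HP HD' X HX. apply HP.
    eapply Rle_trans; [| exact HX]. apply Rinv_le_contravar; lra.
  - intros j Hj. pose proof (Rpower_gt0 (c4 j / eps) (/ beta j)).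
    exists (/ (Rpower (c4 j / eps) (/ beta j) + 1)).
    split; [apply Rinv_0_lt_compat; lra |].
    intros X HX. rewrite Rinv_inv in HX.
    apply mul_Rpower_neg_lt; [apply hc4, Hj | apply hbeta, Hj | exact He | lra].
  - destruct (INR_unbounded (/ D)) as [N HN]. exists N.
    apply HDj; [apply cls_range |]. pose proof (height_ge N). lra.
Qed.

Lemma form_bounds (N : nat) :
  c3 (cls N) * Rpower (height N) (- alpha (cls N)) <= Rabs (form N) <= decay N.
Proof. apply hr; [apply cls_range | apply idx_ge]. Qed.

Lemma decay_crossing (x : R) : 0 < x -> x <= decay 0 -> exists N, x <= decay N /\ decay (S N) < x.
Proof.
  intros Hx H0. destruct (decay_eventually_lt x Hx) as [n Hn].
  destruct (first_crossing (fun N => decay N < x) n) as [N [HN HSN]]; [lra | exact Hn |].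
  exists N. split; [lra | exact HSN].
Qed.

Lemma crossing_index (q : R) : 1 <= q -> / (2 * decay 0) <= q ->
  exists N, / (2 * q) <= decay N /\ q * Rabs (form (S N)) < / 2.
Proof.
  intros Hq1 Hq. pose proof (decay_pos 0) as Ht0.
  destruct (decay_crossing (/ (2 * q))) as [N [HN HSN]].
  - apply Rinv_0_lt_compat; lra.
  - rewrite <- (Rinv_inv (decay 0%nat)).
    apply Rinv_le_contravar; [apply Rinv_0_lt_compat, Ht0 | rewrite Rinv_mult in Hq; lra].
  - exists N. split; [exact HN |].
    destruct (form_bounds (S N)) as [_ Hup].
    apply Rle_lt_trans with (q * decay (S N)); [apply Rmult_le_compat_l; lra |].
    apply (Rmult_lt_compat_l q) in HSN; [| lra].
    replace (q * / (2 * q)) with (/ 2) in HSN by (field; lra). exact HSN.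
Qed.

Lemma form_near_int (N : nat) (p : nat -> Z) (q : Z) (d : R) :
  0 < IZR q -> (forall i, (1 <= i <= u)%nat -> Rabs (gamma i - IZR (p i) / IZR q) <= d) ->
  exists A : Z, Rabs (IZR q * form N - IZR A) <= INR u * c2 (cls N) * height N * IZR q * d.
Proof.
  intros Hq Hd. rewrite (Rmult_assoc (INR u)).
  apply (lin_form_near_int _ p); [exact Hq | | exact Hd].
  intros i Hi. eapply Rle_trans;
    [exact (max1_ge (fun i => Rabs (IZR (h (cls N) (idx N) i))) u i Hi) |].
  apply hh; [apply cls_range | apply idx_ge].
Qed.

Lemma uniform_step_bound : exists D, 0 < D /\ forall j, (1 <= j <= t)%nat ->
  step_bound (c4 j) (beta j) (theta j) C1
    (alpha (cyc_succ t j)) (c3 (cyc_succ t j)) (INR u * c2 (cyc_succ t j)) D.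
Proof.
  apply (ex_pos_uniform t (fun j D => step_bound (c4 j) (beta j) (theta j) C1
    (alpha (cyc_succ t j)) (c3 (cyc_succ t j)) (INR u * c2 (cyc_succ t j)) D)).
  { intros j D D'. apply step_bound_le. }
  intros j Hj. pose proof (cyc_succ_range t j Hj) as Hs.
  pose proof (htheta j Hj). pose proof (hbeta _ Hs). pose proof (hbeta_alpha _ Hs).
  apply ex_step_bound; auto; try lra.
  apply Rmult_lt_0_compat; [apply lt_0_INR; lia | auto].
Qed.

Theorem approximation_lower_bound :
  exists Q0 C : R, 0 < Q0 /\ 0 < C /\
    forall (p : nat -> Z) (q : Z), IZR q >= Q0 ->
      max1 (fun i => Rabs (gamma i - IZR (p i) / IZR q)) u > C * Rpower (IZR q) (- mu_exponent).
Proof.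
  destruct uniform_step_bound as [D [HD Hstep]].
  exists (Rmax 1 (/ (2 * decay 0%nat))), (D / 2).
  pose proof (Rmax_l 1 (/ (2 * decay 0%nat))). pose proof (Rmax_r 1 (/ (2 * decay 0%nat))).
  split; [lra | split; [lra |]].
  intros p q Hq.
  set (d := max1 (fun i => Rabs (gamma i - IZR (p i) / IZR q)) u).
  assert (Hd : forall i, (1 <= i <= u)%nat -> Rabs (gamma i - IZR (p i) / IZR q) <= d)
    by (intros i Hi; exact (max1_ge (fun i => Rabs (gamma i - IZR (p i) / IZR q)) u i Hi)).
  destruct (crossing_index (IZR q)) as [N [HN Hsmall]]; [lra | lra |].
  destruct (form_near_int (S N) p q d) as [A HA]; [lra | exact Hd |].
  destruct (form_bounds (S N)) as [Hlow _].
  assert (Hbound : D * Rpower (IZR q) (- mu_exponent) <= d).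
  { specialize (Hstep (cls N) (cls_range N)). rewrite <- cls_S in Hstep.
    apply (Hstep mu_exponent (height N) (height (S N)) (IZR q) d (form (S N)) A);
      try assumption.
    - rewrite cls_S. apply mu_ge_step, cls_range.
    - apply mu_ge_one_plus, cls_range.
    - pose proof (height_ge (S N)). pose proof (pos_INR (S N)). lra.
    - lra.
    - apply height_step. }
  pose proof (Rpower_gt0 (IZR q) (- mu_exponent)).
  assert (0 < D * Rpower (IZR q) (- mu_exponent)) by (apply Rmult_lt_0_compat; lra).
  lra.
Qed.

End LowerBound.

(* Indices: gamma i (1<=i<=u); the pair (k_j, m) is indexed by j (1<=j<=t) and
   m (>= m0); h j m i = h_i(k_j,m); Q j m = Q_{k_j,m}; constants c1..c4, theta,
   alpha, beta are indexed by j (i.e. by k_j). *)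
Theorem lemma1
  (u t : nat) (hu : (1 <= u)%nat) (ht : (1 <= t)%nat)
  (gamma : nat -> R) (k : nat -> nat)
  (hk_pos : (0 < k 1%nat)%nat)
  (hk_inc : forall j, (1 <= j < t)%nat -> (k j < k (S j))%nat)
  (m0 : nat) (hm0 : (0 < m0)%nat)
  (h : nat -> nat -> nat -> Z) (Q : nat -> nat -> Z)
  (c1 c2 c3 c4 theta alpha beta : nat -> R) (C1 : R)
  (hC1 : 0 < C1)
  (hc : forall j, (1 <= j <= t)%nat ->
        0 < c1 j /\ 0 < c2 j /\ 0 < c3 j /\ 0 < c4 j)
  (htheta : forall j, (1 <= j <= t)%nat -> 1 <= theta j)
  (hab : forall j, (1 <= j <= t)%nat -> alpha j >= beta j /\ beta j > 0)
  (hQpos : forall j m, (1 <= j <= t)%nat -> (m0 <= m)%nat -> (0 < Q j m)%Z)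
  (hh : forall j m, (1 <= j <= t)%nat -> (m0 <= m)%nat ->
        c1 j * IZR (Q j m) <= max1 (fun i => Rabs (IZR (h j m i))) u /\
        max1 (fun i => Rabs (IZR (h j m i))) u <= c2 j * IZR (Q j m))
  (hQj : forall j m, (1 <= j < t)%nat -> (m0 <= m)%nat ->
        (Q j m < Q (S j) m)%Z /\
        IZR (Q (S j) m) <= C1 * Rpower (IZR (Q j m)) (theta j))
  (hQt : forall m, (m0 <= m)%nat ->
        (Q t m < Q 1%nat (S m))%Z /\
        IZR (Q 1%nat (S m)) <= C1 * Rpower (IZR (Q t m)) (theta t))
  (hr : forall j m, (1 <= j <= t)%nat -> (m0 <= m)%nat ->
        c3 j * Rpower (IZR (Q j m)) (- alpha j) <= Rabs (lin_form (h j m) gamma u) /\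
        Rabs (lin_form (h j m) gamma u) <= c4 j * Rpower (IZR (Q j m)) (- beta j)) :
  let alpha' := fun j : nat => if Nat.eqb j (S t) then alpha 1%nat else alpha j in
  let mu := max1 (fun j => theta j * (alpha' (S j) + 1) / beta j) t in
  exists Q0 C : R, 0 < Q0 /\ 0 < C /\
    forall (p : nat -> Z) (q : Z), IZR q >= Q0 ->
      max1 (fun i => Rabs (gamma i - IZR (p i) / IZR q)) u >
        C * Rpower (IZR q) (- mu).
Proof.
  intros alpha' mu.
  apply (approximation_lower_bound u t m0 gamma h Q c2 c3 c4 theta alpha beta C1);
    try assumption.
  - intros j Hj. apply hc, Hj.
  - intros j Hj. apply hc, Hj.
  - intros j Hj. apply hc, Hj.
  - intros j Hj. apply hab, Hj.
  - intros j Hj. apply Rge_le, hab, Hj.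
  - apply hQpos; lia.
  - intros j m Hj Hm. apply hh; assumption.
Qed.
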